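(* Let $G$ be a finite undirected graph, $\tau\ge1$ an odd integer, and $e=(u,v)\in E(G)$. Then $\phi_\tau(e,G)\ge|V(\Omega(e))|$.
   Context: Graphs are finite, simple, undirected and unweighted; paths may repeat vertices and their length is the number of edges. For vertices $v,u$ of a graph $H$, $u$ is $t$-hop reachable from $v$ in $H$ (written $u\rightarrow_t v$) if there is a path between them in $H$ of length at most $t$. $N_t(v,H)$ is the set of vertices $u\ne v$ that are $t$-hop reachable from $v$ in $H$. For an edge $e=(u,v)$ of $H$, $\Delta_t(e,H)=N_t(u,H)\cap N_t(v,H)$ and $\mathrm{sup}_t(e,H)=|\Delta_t(e,H)|$. The $(k,\tau)$-truss of $G$ is the maximal subgraph $G'$ of $G$ such that $\mathrm{sup}_\tau(e,G')\ge k-2$ for every $e\in E(G')$ (supports computed inside $G'$) and no more edges of $G$ can be added while keeping this property. The higher-order truss number $\phi_\tau(e,G)$ is the maximum $k$ such that $e$ belongs to the $(k,\tau)$-truss of $G$. For odd $\tau$ and an edge $e=(u,v)$, the edge centric $\tau$-diameter subgraph $\Omega(e)$ is the subgraph of $G$ induced by $\{u\}\cup\{v\}\cup\{w : w\rightarrow_{\lfloor\tau/2\rfloor} u \text{ or } w\rightarrow_{\lfloor\tau/2\rfloor} v \text{ in } G\}$. *)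

(* Finite simple undirected graphs on a finType T, given by
   their edge set E : {set {set T}} (each edge is a 2-element set {x, y}).
   The vertex set of G is the whole type T. *)
From mathcomp Require Import all_boot.
Set Implicit Arguments. Unset Strict Implicit. Unset Printing Implicit Defensive.

Section Defs.
Variable T : finType.
Implicit Types (E F : {set {set T}}) (x y z : T).

Definition simple_graph E := forall e, e \in E -> #|e| = 2.

Definition adj E x y : bool := (x != y) && ([set x; y] \in E).

Fixpoint reach E (t : nat) x y : bool :=
  if t is t'.+1 then reach E t' x y || [exists z, reach E t' x z && adj E z y]
  else x == y.

Definition nbhd E t x : {set T} := [set w | (w != x) && reach E t x w].

Definition sup E t x y : nat := #|nbhd E t x :&: nbhd E t y|.

Definition truss_prop k t F : bool :=
  [forall e in F, forall x, forall y,
     ((e == [set x; y]) && (x != y)) ==> (k <= sup F t x y + 2)].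

Definition is_truss k t E F : bool :=
  (F \subset E) && truss_prop k t F &&
  [forall F' : {set {set T}},
     ((F \subset F') && (F' \subset E) && truss_prop k t F') ==> (F' == F)].

Definition in_truss k t E e : bool :=
  [exists F : {set {set T}}, is_truss k t E F && (e \in F)].

(* higher-order truss number phi_t(e, G): the maximum k such that e lies in
   the (k,t)-truss.  Supports are at most #|T|, so every such k is < #|T|+3;
   the bound only makes the maximum range finite. *)
Definition truss_number t E e : nat :=
  \max_(k < #|T|.+3 | in_truss k t E e) k.

Definition omega_vertices E t u v : {set T} :=
  [set w | (w == u) || (w == v) || reach E t./2 u w || reach E t./2 v w].

End Defs.

From mathcomp Require Import all_boot.
Set Implicit Arguments. Unset Strict Implicit. Unset Printing Implicit Defensive.

(* Write tau = 2h + 1 and let O be the vertex set of Omega(u,v).  Every walk of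
   length at most h from u or v stays in O, so in the subgraph induced by O every
   vertex is within h of u or of v; through the edge uv any two vertices of O are
   then within h + 1 + h = tau.  Hence each edge xy of the induced subgraph has all
   of O minus {x, y} in its tau-support, so the induced subgraph satisfies the
   (|O|, tau)-truss condition, and it lies inside the (|O|, tau)-truss of G. *)

Section Walks.
Variable T : finType.
Implicit Types (E F : {set {set T}}) (O : {set T}) (x y z w : T).

Lemma adj_sym E x y : adj E x y = adj E y x.
Proof. by rewrite /adj eq_sym setUC. Qed.

Lemma adjS E F x y : E \subset F -> adj E x y -> adj F x y.
Proof. by move=> sEF /andP[xy /(subsetP sEF) xyF]; rewrite /adj xy xyF. Qed.

Lemma reachS E F t x y : E \subset F -> reach E t x y -> reach F t x y.
Proof.
move=> sEF; elim: t y => [|t IHt] y //=.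
case/orP=> [/IHt -> //|/existsP[z /andP[/IHt xz zy]]].
by apply/orP; right; apply/existsP; exists z; rewrite xz (adjS sEF zy).
Qed.

Lemma reach_leq E t t' x y : t <= t' -> reach E t x y -> reach E t' x y.
Proof.
move=> /subnKC <-; elim: (t' - t) => [|d IHd] xy; first by rewrite addn0.
by rewrite addnS /= IHd.
Qed.

Lemma reach_refl E t x : reach E t x x.
Proof. by apply: (@reach_leq _ 0); rewrite /= ?eqxx. Qed.

Lemma reach1_adj E x y : adj E x y -> reach E 1 x y.
Proof. by move=> xy; apply/orP; right; apply/existsP; exists x; rewrite /= eqxx. Qed.

Lemma reach_trans E a b x y z :
  reach E a x y -> reach E b y z -> reach E (a + b) x z.
Proof.
move=> xy; elim: b z => [|b IHb] z /=; first by rewrite addn0 => /eqP <-.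
rewrite addnS /=; case/orP=> [/IHb -> //|/existsP[w /andP[/IHb xw wz]]].
by apply/orP; right; apply/existsP; exists w; rewrite xw.
Qed.

Lemma reach_sym E t x y : reach E t x y -> reach E t y x.
Proof.
elim: t x y => [|t IHt] x y; first by rewrite /= eq_sym.
rewrite [reach E t.+1 x y]/=; case/orP=> [/IHt/reach_leq-> //|].
case/existsP=> z /andP[/IHt zx zy].
by rewrite -add1n (reach_trans _ zx) // reach1_adj // adj_sym.
Qed.

Definition induced E O : {set {set T}} := [set e in E | e \subset O].

Lemma induced_sub E O : induced E O \subset E.
Proof. by apply/subsetP => e; rewrite inE => /andP[]. Qed.

Lemma reach_induced E O s c w :
  (forall w', reach E s c w' -> w' \in O) -> reach E s c w -> reach (induced E O) s c w.
Proof.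
elim: s w => [|s IHs] w // inO /=.
have inO' w' : reach E s c w' -> w' \in O by move=> r; apply: inO; rewrite /= r.
case/orP=> [/(IHs _ inO') -> //|/existsP[z /andP[cz zw]]].
have cw : reach E s.+1 c w by apply/orP; right; apply/existsP; exists z; apply/andP.
move: zw => /andP[zw zwE]; apply/orP; right; apply/existsP; exists z.
by rewrite (IHs z inO' cz) /adj zw inE zwE subUset !sub1set (inO' z cz) (inO w cw).
Qed.

Lemma reach_two_centers F O h u v :
  adj F u v -> {in O, forall x, reach F h u x || reach F h v x} ->
  {in O &, forall x y, reach F (h + 1 + h) x y}.
Proof.
move=> uv near; have vu : reach F 1 v u by rewrite reach1_adj // adj_sym.
move=> x y /near/orP[]/reach_sym xc /near/orP[] cy.
- by apply: reach_leq (reach_trans xc cy); rewrite leq_add2r leq_addr.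
- exact: reach_trans (reach_trans xc (reach1_adj uv)) cy.
- exact: reach_trans (reach_trans xc vu) cy.
- by apply: reach_leq (reach_trans xc cy); rewrite leq_add2r leq_addr.
Qed.

End Walks.

Section Truss.
Variable T : finType.
Implicit Types (E F : {set {set T}}) (O : {set T}) (x y : T).

Lemma supS E F t x y : E \subset F -> sup E t x y <= sup F t x y.
Proof.
move=> sEF; apply/subset_leq_card/setISS;
  by apply/subsetP => w; rewrite !inE => /andP[-> /=]; apply: reachS.
Qed.

Definition truss_union k t E : {set {set T}} :=
  \bigcup_(F : {set {set T}} | (F \subset E) && truss_prop k t F) F.

(* Supports only grow with the subgraph. *)
Lemma truss_prop_union k t E : truss_prop k t (truss_union k t E).
Proof.
apply/forall_inP => e /bigcupP[F FE eF].
apply/forallP => x; apply/forallP => y; apply/implyP => exy.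
have /andP[_ /forall_inP/(_ e eF)/forallP/(_ x)/forallP/(_ y)/implyP/(_ exy) kxy] := FE.
by apply: leq_trans kxy _; rewrite leq_add2r supS // (bigcup_sup F).
Qed.

Lemma in_truss_sub k t E F e :
  F \subset E -> truss_prop k t F -> e \in F -> in_truss k t E e.
Proof.
move=> sFE kF eF; apply/existsP; exists (truss_union k t E).
have sFU : F \subset truss_union k t E by rewrite (bigcup_sup F) ?sFE.
have sUE : truss_union k t E \subset E by apply/bigcupsP => G /andP[].
rewrite (subsetP sFU e eF) /is_truss sUE truss_prop_union /= andbT.
apply/forallP => G; apply/implyP => /andP[/andP[sUG sGE] kG].
by rewrite eqEsubset sUG andbT (bigcup_sup G) ?sGE.
Qed.

Lemma in_truss_leq_truss_number k t E x y :
  x != y -> in_truss k t E [set x; y] -> k <= truss_number t E [set x; y].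
Proof.
move=> xy kxy; have /existsP[F /andP[/andP[/andP[_ kF] _] xyF]] := kxy.
have le_k : k < #|T|.+3.
  move/forall_inP: kF => /(_ _ xyF)/forallP/(_ x)/forallP/(_ y).
  rewrite eqxx xy ltnS => /leq_trans; apply.
  by rewrite addn2 !ltnS max_card.
exact: (@leq_bigmax_cond _ _ (fun k : 'I_#|T|.+3 => nat_of_ord k) (Ordinal le_k)).
Qed.

(* Every vertex of O other than x and y is in the support of the edge xy. *)
Lemma truss_prop_diameter O t F :
  (forall e, e \in F -> e \subset O) -> {in O &, forall x y, reach F t x y} ->
  truss_prop #|O| t F.
Proof.
move=> FO diam; apply/forall_inP => e eF.
apply/forallP => x; apply/forallP => y; apply/implyP => /andP[/eqP exy xy].
move: (FO e eF); rewrite exy subUset !sub1set => /andP[xO yO].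
rewrite -(cardsID [set x; y] O) addnC leq_add //.
  apply/subset_leq_card/subsetP => w /setDP[wO].
  by rewrite !inE negb_or => /andP[wx wy]; rewrite wx wy !diam.
by rewrite (leq_trans (subset_leq_card (subsetIr _ _))) // cards2 xy.
Qed.

End Truss.

Theorem lemma6 (T : finType) (E : {set {set T}}) (tau : nat) (u v : T) :
  simple_graph E -> 1 <= tau -> odd tau -> u != v -> [set u; v] \in E ->
  #|omega_vertices E tau u v| <= truss_number tau E [set u; v].
Proof.
move=> _ _ odd_tau uv uvE.
set h := tau./2; set O := omega_vertices E tau u v; set F := induced E O.
have tau_h : tau = h + 1 + h.
  by rewrite -{1}(odd_double_half tau) odd_tau -addnn addn1 add1n addSn.
have ballO c s w : c \in [:: u; v] -> s <= h -> reach E s c w -> w \in O.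
  by rewrite !inE => /orP[]/eqP-> le_s /(reach_leq le_s) r; rewrite r ?orbT.
have uvF : [set u; v] \in F.
  by rewrite /F /induced inE uvE subUset !sub1set !inE !eqxx ?orbT.
have nearO : {in O, forall x, reach F h u x || reach F h v x}.
  move=> x; rewrite /O /omega_vertices inE.
  case/orP=> [/orP[/orP[/eqP->|/eqP->]|ux]|vx].
  - by rewrite reach_refl.
  - by rewrite reach_refl orbT.
  - by rewrite reach_induced // => w; apply: ballO; rewrite ?inE ?eqxx.
  - by rewrite orbC reach_induced // => w; apply: ballO; rewrite ?inE ?eqxx ?orbT.
have FO e : e \in F -> e \subset O by rewrite /F /induced inE => /andP[].
have adj_uv : adj F u v by rewrite /adj uv uvF.
have kF : truss_prop #|O| tau F.
  by rewrite tau_h; apply: truss_prop_diameter FO (reach_two_centers adj_uv nearO).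
exact/in_truss_leq_truss_number/(in_truss_sub (induced_sub E O) kF uvF).
Qed.
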